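(* (a) Let $\sigma^{(1)},\sigma^{(2)}$ be admissible controls with $\sigma^{(1)}(t)\ge\sigma^{(2)}(t)$ for all $t$, and let $w^{(i)}=(x_b^{(i)},x_d^{(i)},y^{(i)})$ solve $\dot w=f(t,w;\sigma^{(i)}(t))$ with $w^{(i)}(0)\in R(0)$ and $w^{(1)}(0)\ge w^{(2)}(0)$. Then $w^{(1)}(t)\ge w^{(2)}(t)$ for all $t\ge0$. (b) Let $y^{(1)},y^{(2)}:[0,\infty)\to\mathbb R$ be continuous with $s(t)\ge y^{(1)}(t)\ge y^{(2)}(t)\ge0$ for all $t$, and let $(x_b^{(i)},x_d^{(i)})$ solve $\dot{(x_b,x_d)}=g(t,(x_b,x_d);y^{(i)}(t))$ with $0\le x_b^{(i)}(0)\le b(0)$, $0\le x_d^{(i)}(0)\le d(0)$ and $(x_b^{(1)}(0),x_d^{(1)}(0))\ge(x_b^{(2)}(0),x_d^{(2)}(0))$. Then $(x_b^{(1)}(t),x_d^{(1)}(t))\ge(x_b^{(2)}(t),x_d^{(2)}(t))$ for all $t\ge0$.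
   Context: Fix $\lambda>0$, $\beta>0$, $\Gamma\in(0,1]$, $d_0\in(0,1)$. Let $(b(t),d(t))$ solve $\dot b=\beta d$, $\dot d=-\beta d+\lambda\Gamma ds$ with $b(0)=0$, $d(0)=d_0$, where $s=1-b-d$. For $w=(x_b,x_d,y)$ and control value $\sigma\in[0,1]$, define $f(t,w;\sigma)=(f_{x_b},f_{x_d},f_y)$ by $f_{x_b}=\beta x_d+\lambda(b-x_b)(x+y)$, $f_{x_d}=\Gamma\lambda(d-x_d)y+\Gamma\lambda x_ds+\lambda(d-x_d)(x+y)-\beta x_d$, $f_y=-\Gamma\lambda dy+\lambda\sigma(s-y)(x_b+y+(1-\Gamma)x_d)$, with $x=x_b+x_d$ and $b,d,s$ evaluated at $t$. For $(x_b,x_d)$ and a control value $y$, $g(t,(x_b,x_d);y)=(f_{x_b},f_{x_d})$ with the same formulas. Region $R(t)=\{(x_b,x_d,y):0\le x_b\le b(t),\ 0\le x_d\le d(t),\ 0\le y\le s(t)\}$. Admissible controls are piecewise Lipschitz continuous $\sigma:[0,\infty)\to[0,1]$. Vector inequalities are componentwise. *)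

From Stdlib Require Import Reals Lra.
Open Scope R_scope.

Definition cont_nonneg (u : R -> R) : Prop :=
  forall t, 0 <= t -> forall eps, 0 < eps ->
    exists delta, 0 < delta /\
      forall s, 0 <= s -> Rabs (s - t) < delta -> Rabs (u s - u t) < eps.

Definition bd_solution (lam beta Gam d0 : R) (b d : R -> R) : Prop :=
  b 0 = 0 /\ d 0 = d0 /\ cont_nonneg b /\ cont_nonneg d /\
  forall t, 0 < t ->
    derivable_pt_lim b t (beta * d t) /\
    derivable_pt_lim d t (- beta * d t + lam * Gam * d t * (1 - b t - d t)).

(* Components of f (and g). Arguments: b, d, s evaluated at t. *)
Definition f_xb (lam beta : R) (b : R) (xb xd y : R) : R :=
  beta * xd + lam * (b - xb) * ((xb + xd) + y).

Definition f_xd (lam beta Gam : R) (d s : R) (xb xd y : R) : R :=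
  Gam * lam * (d - xd) * y + Gam * lam * xd * s
  + lam * (d - xd) * ((xb + xd) + y) - beta * xd.

Definition f_y (lam Gam : R) (d s : R) (sigma : R) (xb xd y : R) : R :=
  - Gam * lam * d * y + lam * sigma * (s - y) * (xb + y + (1 - Gam) * xd).

Definition partition (tau : nat -> R) : Prop :=
  tau 0%nat = 0 /\ (forall k, tau k < tau (S k)) /\
  (forall M, exists k, M < tau k).

Definition admissible (sigma : R -> R) : Prop :=
  (forall t, 0 <= t -> 0 <= sigma t <= 1) /\
  exists tau, partition tau /\
    forall k, exists L, forall s t,
      tau k <= s < tau (S k) -> tau k <= t < tau (S k) ->
      Rabs (sigma s - sigma t) <= L * Rabs (s - t).

(* w = (xb,xd,y) solves w' = f(t,w;sigma(t)) on [0,+oo): w is continuous on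
   [0,+oo) and satisfies the ODE classically at every t > 0 outside a locally
   finite set of switching points. *)
Definition f_solution (lam beta Gam : R) (b d sigma : R -> R)
    (xb xd y : R -> R) : Prop :=
  cont_nonneg xb /\ cont_nonneg xd /\ cont_nonneg y /\
  exists tau, partition tau /\
    forall t, 0 < t -> (forall k, t <> tau k) ->
      let s := 1 - b t - d t in
      derivable_pt_lim xb t (f_xb lam beta (b t) (xb t) (xd t) (y t)) /\
      derivable_pt_lim xd t (f_xd lam beta Gam (d t) s (xb t) (xd t) (y t)) /\
      derivable_pt_lim y t (f_y lam Gam (d t) s (sigma t) (xb t) (xd t) (y t)).

Definition g_solution (lam beta Gam : R) (b d y : R -> R)
    (xb xd : R -> R) : Prop :=
  cont_nonneg xb /\ cont_nonneg xd /\
  forall t, 0 < t ->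
    let s := 1 - b t - d t in
    derivable_pt_lim xb t (f_xb lam beta (b t) (xb t) (xd t) (y t)) /\
    derivable_pt_lim xd t (f_xd lam beta Gam (d t) s (xb t) (xd t) (y t)).

Definition in_region (b d : R -> R) (t xb xd y : R) : Prop :=
  0 <= xb <= b t /\ 0 <= xd <= d t /\ 0 <= y <= 1 - b t - d t.

(* Both parts are instances of one comparison principle for quasi-monotone
   differential inequalities (comparison_principle): if finitely many
   functions u_i, continuous on [0, +oo) and differentiable off a set of
   times that does not accumulate from the left, start nonnegative and
   satisfy u_i' >= - K a whenever u_i <= 0 and every u_j >= - a, then all
   u_i stay nonnegative.  It is proved by adding eps exp ((K + 1) t) and
   looking at the first time a perturbed function would vanish (first_exit,
   obtained as a supremum): there the mean value theorem contradicts the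
   positive derivative forced by quasi-monotonicity.

   The vector field meets this condition with K = rate_const, both for the
   six slacks measuring the distance to the faces of R(t) and for the
   coordinate gaps between two states of R(t), by elementary one-sided
   estimates for each coordinate of f. *)

From Stdlib Require Import Reals Lra Lia Classical.
Open Scope R_scope.

Lemma cont_plus (f g : R -> R) :
  cont_nonneg f -> cont_nonneg g -> cont_nonneg (fun t => f t + g t).
Proof.
  intros Hf Hg t Ht e He.
  destruct (Hf t Ht (e / 2) ltac:(lra)) as [d1 [Hd1 H1]].
  destruct (Hg t Ht (e / 2) ltac:(lra)) as [d2 [Hd2 H2]].
  exists (Rmin d1 d2); split; [apply Rmin_pos; lra |].
  intros s Hs Hst.
  pose proof (Rmin_l d1 d2); pose proof (Rmin_r d1 d2).
  pose proof (H1 s Hs ltac:(lra)); pose proof (H2 s Hs ltac:(lra)).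
  replace (f s + g s - (f t + g t)) with ((f s - f t) + (g s - g t)) by ring.
  pose proof (Rabs_triang (f s - f t) (g s - g t)); lra.
Qed.

Lemma cont_minus (f g : R -> R) :
  cont_nonneg f -> cont_nonneg g -> cont_nonneg (fun t => f t - g t).
Proof.
  intros Hf Hg.
  assert (Hopp : cont_nonneg (fun t => - g t)).
  { intros t Ht e He. destruct (Hg t Ht e He) as [d [Hd H]].
    exists d; split; [exact Hd |]. intros s Hs Hst.
    replace (- g s - - g t) with (- (g s - g t)) by ring.
    rewrite Rabs_Ropp; auto. }
  exact (cont_plus f _ Hf Hopp).
Qed.

Lemma cont_const (c : R) : cont_nonneg (fun _ => c).
Proof.
  intros t _ e He. exists 1; split; [lra |]. intros s _ _.
  rewrite Rminus_diag, Rabs_R0; exact He.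
Qed.

Lemma cont_of_continuity (f : R -> R) :
  (forall t, continuity_pt f t) -> cont_nonneg f.
Proof.
  intros Hc t _ e He.
  destruct (Hc t e He) as [d [Hd H]].
  exists d; split; [exact Hd |]. intros s _ Hst.
  destruct (Req_dec t s) as [<- | Hne].
  - rewrite Rminus_diag, Rabs_R0; exact He.
  - apply (H s). repeat split; auto.
Qed.

Lemma continuity_of_cont (f : R -> R) (t : R) :
  cont_nonneg f -> 0 < t -> continuity_pt f t.
Proof.
  intros Hc Ht e He.
  destruct (Hc t (Rlt_le _ _ Ht) e He) as [d [Hd H]].
  exists (Rmin d t); split; [apply Rmin_pos; lra |].
  intros x [_ Hx]. simpl in *. unfold R_dist in *.
  pose proof (Rmin_l d t); pose proof (Rmin_r d t).
  apply H; [| lra].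
  revert Hx; unfold Rabs; destruct Rcase_abs; lra.
Qed.

(* Pointwise form of derivable_pt_lim_minus, convenient for explicit lambdas. *)
Lemma derivable_pt_lim_minus_pt (f g : R -> R) (x l1 l2 : R) :
  derivable_pt_lim f x l1 -> derivable_pt_lim g x l2 ->
  derivable_pt_lim (fun t => f t - g t) x (l1 - l2).
Proof. intros; apply (derivable_pt_lim_minus f g); auto. Qed.

(* The perturbation eps * exp (M t) used to make inequalities strict. *)
Lemma derivable_pt_lim_exp_ramp (eps M x : R) :
  derivable_pt_lim (fun t => eps * exp (M * t)) x (eps * (M * exp (M * x))).
Proof.
  apply (derivable_pt_lim_scal (fun t => exp (M * t))).
  replace (M * exp (M * x)) with (exp (M * x) * M) by ring.
  apply (derivable_pt_lim_comp (fun t => M * t) exp); [| apply derivable_pt_lim_exp].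
  assert (Hlin : derivable_pt_lim (fun t => M * t) x (M * 1))
    by apply (derivable_pt_lim_scal id), derivable_pt_lim_id.
  rewrite Rmult_1_r in Hlin; exact Hlin.
Qed.

Lemma exp_le_exp (x y : R) : x <= y -> exp x <= exp y.
Proof.
  intros [Hlt | ->]; [left; apply exp_increasing, Hlt | right; reflexivity].
Qed.

(** Sets of exceptional times that never accumulate from the left *)

(* Derivatives may fail to exist on such a set; each point of (0, +oo)
   is approached from the left through regular times. *)
Definition left_sparse (bad : R -> Prop) : Prop :=
  forall t, 0 < t -> exists dl, 0 < dl /\ forall s, t - dl < s < t -> ~ bad s.

Lemma left_sparse_empty : left_sparse (fun _ => False).
Proof. intros t _. exists 1; split; [lra | tauto]. Qed.

Lemma left_sparse_union (A B : R -> Prop) :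
  left_sparse A -> left_sparse B -> left_sparse (fun t => A t \/ B t).
Proof.
  intros HA HB t Ht.
  destruct (HA t Ht) as [d1 [Hd1 H1]]; destruct (HB t Ht) as [d2 [Hd2 H2]].
  exists (Rmin d1 d2); split; [apply Rmin_pos; lra |].
  pose proof (Rmin_l d1 d2); pose proof (Rmin_r d1 d2).
  intros s Hs [HAs | HBs]; [apply (H1 s) | apply (H2 s)]; auto; lra.
Qed.

Lemma partition_mono (tau : nat -> R) :
  partition tau -> forall k j, (k <= j)%nat -> tau k <= tau j.
Proof.
  intros [_ [Hinc _]] k j Hkj. induction Hkj; [lra |].
  specialize (Hinc m); lra.
Qed.

(* The nodes of a partition form a left-sparse set: left of t > 0 the
   nearest node is the last one strictly below t. *)
Lemma partition_left_sparse (tau : nat -> R) :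
  partition tau -> left_sparse (fun t => exists k, t = tau k).
Proof.
  intros Hp t Ht. pose proof Hp as [H0 [_ Hunb]].
  assert (Hbracket : forall k, t <= tau k -> exists j, tau j < t <= tau (S j)).
  { induction k as [| k IH]; intros Hk; [lra |].
    destruct (Rle_or_lt t (tau k)) as [Hle | Hlt]; [exact (IH Hle) |].
    exists k; split; lra. }
  destruct (Hunb t) as [k Hk].
  destruct (Hbracket k ltac:(lra)) as [j [Hj1 Hj2]].
  exists (t - tau j); split; [lra |].
  intros s Hs [m ->].
  destruct (Compare_dec.le_lt_dec m j) as [Hmj | Hmj].
  - pose proof (partition_mono tau Hp m j Hmj); lra.
  - pose proof (partition_mono tau Hp (S j) m Hmj); lra.
Qed.

(** A comparison principle for quasi-monotone differential inequalities *)

Lemma finite_min (n : nat) (Q : nat -> R -> Prop) :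
  (forall i d d', 0 < d' <= d -> Q i d -> Q i d') ->
  (forall i, (i < n)%nat -> exists d, 0 < d /\ Q i d) ->
  exists d, 0 < d /\ forall i, (i < n)%nat -> Q i d.
Proof.
  intros Hmono. induction n as [| n IH]; intros H.
  - exists 1; split; [lra | intros i Hi; lia].
  - destruct IH as [d1 [Hd1 H1]]; [intros i Hi; apply H; lia |].
    destruct (H n ltac:(lia)) as [d2 [Hd2 H2]].
    exists (Rmin d1 d2); split; [apply Rmin_pos; lra |].
    pose proof (Rmin_l d1 d2); pose proof (Rmin_r d1 d2).
    assert (0 < Rmin d1 d2) by (apply Rmin_pos; lra).
    intros i Hi; destruct (Nat.eq_dec i n) as [-> | Hne].
    + apply Hmono with d2; [lra | exact H2].
    + apply Hmono with d1; [lra | apply H1; lia].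
Qed.

Lemma increasing_of_pos_deriv (w w' : R -> R) (a b : R) :
  0 < a < b -> cont_nonneg w ->
  (forall c, a < c < b -> derivable_pt_lim w c (w' c) /\ 0 < w' c) ->
  w a < w b.
Proof.
  intros Hab Hc Hd.
  assert (pr1 : forall c, a < c < b -> derivable_pt w c)
    by (intros c Hcab; exists (w' c); apply Hd, Hcab).
  assert (pr2 : forall c, a < c < b -> derivable_pt id c)
    by (intros c _; apply derivable_pt_id).
  destruct (MVT w id a b pr1 pr2) as [c [Pc Heq]].
  - lra.
  - intros c Hcab; apply continuity_of_cont; [exact Hc | lra].
  - intros c _; apply derivable_continuous_pt, derivable_pt_id.
  - destruct (Hd c Pc) as [Hwc Hpos].
    rewrite (derive_pt_eq_0 w c (w' c) (pr1 c Pc) Hwc),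
            (derive_pt_eq_0 id c 1 (pr2 c Pc) (derivable_pt_lim_id c)) in Heq.
    unfold id in Heq. nra.
Qed.

Section FirstExit.
Variables (n : nat) (v : nat -> R -> R).
Hypothesis v_cont : forall i, (i < n)%nat -> cont_nonneg (v i).

Definition positive_before (t : R) : Prop :=
  forall s, 0 <= s < t -> forall i, (i < n)%nat -> 0 < v i s.

Lemma positivity_extends (ts : R) :
  0 <= ts -> positive_before ts -> (forall i, (i < n)%nat -> 0 < v i ts) ->
  exists m, ts < m /\ positive_before m.
Proof.
  intros Hts Hbefore Hat.
  destruct (finite_min n (fun i d => forall s, 0 <= s -> Rabs (s - ts) < d -> 0 < v i s))
    as [dl [Hdl Hnear]].
  { intros i d d' Hd' Hq s Hs Hsd; apply Hq; [exact Hs | lra]. }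
  { intros i Hi. destruct (v_cont i Hi ts Hts (v i ts) (Hat i Hi)) as [dl [Hdl Hq]].
    exists dl; split; [exact Hdl |]. intros s Hs Hsd.
    specialize (Hq s Hs Hsd); revert Hq; unfold Rabs; destruct Rcase_abs; lra. }
  exists (ts + dl / 2); split; [lra |].
  intros s Hs i Hi. destruct (Rlt_or_le s ts) as [Hlt | Hge].
  - apply Hbefore; [lra | exact Hi].
  - apply Hnear; [exact Hi | lra | rewrite Rabs_right; lra].
Qed.

(* If some member becomes nonpositive, there is a first time ts at which
   one of them does: ts is the supremum of the times of positivity. *)
Lemma first_exit (i0 : nat) (t0 : R) :
  (forall i, (i < n)%nat -> 0 < v i 0) -> (i0 < n)%nat -> 0 <= t0 -> v i0 t0 <= 0 ->
  exists ts i, 0 < ts <= t0 /\ (i < n)%nat /\ v i ts <= 0 /\ positive_before ts.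
Proof.
  intros H0 Hi0 Ht0pos Ht0.
  set (E := fun t => 0 <= t /\ positive_before t).
  assert (HE0 : E 0) by (split; [lra | intros s Hs; lra]).
  assert (Hbound : is_upper_bound E t0).
  { intros x [Hx Hpx]. apply Rnot_lt_le; intro Hlt.
    specialize (Hpx t0 ltac:(lra) i0 Hi0); lra. }
  destruct (completeness E (ex_intro _ t0 Hbound) (ex_intro _ 0 HE0)) as [ts [Hub Hlub]].
  assert (Hts0 : 0 <= ts) by exact (Hub 0 HE0).
  assert (Htst0 : ts <= t0) by exact (Hlub t0 Hbound).
  assert (Hbefore : positive_before ts).
  { intros s Hs i Hi. apply NNPP; intro Hno.
    assert (Hs_ub : is_upper_bound E s).
    { intros x [Hx Hpx]. apply Rnot_lt_le; intro Hlt.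
      apply Hno, Hpx; [lra | exact Hi]. }
    specialize (Hlub s Hs_ub); lra. }
  destruct (classic (forall i, (i < n)%nat -> 0 < v i ts)) as [Hat | Hnot].
  - destruct (positivity_extends ts Hts0 Hbefore Hat) as [m [Hm Hpm]].
    assert (HEm : E m) by (split; [lra | exact Hpm]).
    specialize (Hub m HEm); lra.
  - apply not_all_ex_not in Hnot as [i Hnot].
    apply imply_to_and in Hnot as [Hi Hvi]; apply Rnot_lt_le in Hvi.
    exists ts, i; repeat split; auto.
    destruct (Rle_lt_or_eq_dec _ _ Hts0) as [| <-]; [assumption |].
    specialize (H0 i Hi); lra.
Qed.
End FirstExit.

Section Comparison.
Variables (n : nat) (u D : nat -> R -> R) (bad : R -> Prop) (K : R).
Hypotheses
  (K_nonneg : 0 <= K)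
  (u_cont : forall i, (i < n)%nat -> cont_nonneg (u i))
  (u_init : forall i, (i < n)%nat -> 0 <= u i 0)
  (bad_sparse : left_sparse bad)
  (u_deriv : forall i t, (i < n)%nat -> 0 < t -> ~ bad t ->
     derivable_pt_lim (u i) t (D i t))
  (quasi_monotone : forall i t a, (i < n)%nat -> 0 < t -> ~ bad t -> 0 < a <= 1 ->
     (forall j, (j < n)%nat -> - a <= u j t) -> u i t <= 0 -> - (K * a) <= D i t).

(* Where all perturbed members are positive and u_i <= 0, the perturbed u_i
   is increasing: quasi-monotonicity with a := eps exp ((K + 1) c) gives
   u_i' >= - K a, while the ramp grows at rate (K + 1) a. *)
Lemma perturbed_deriv_pos (eps c : R) (i : nat) :
  (i < n)%nat -> 0 < c -> ~ bad c -> 0 < eps * exp ((K + 1) * c) <= 1 ->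
  (forall j, (j < n)%nat -> 0 < u j c + eps * exp ((K + 1) * c)) -> u i c <= 0 ->
  0 < D i c + eps * ((K + 1) * exp ((K + 1) * c)).
Proof.
  intros Hi Hc Hreg Ha Hpos Hui.
  assert (HD : - (K * (eps * exp ((K + 1) * c))) <= D i c).
  { apply quasi_monotone; auto. intros j Hj; specialize (Hpos j Hj); lra. }
  nra.
Qed.

(* Adding the ramp eps exp ((K + 1) t) makes every u_i strictly positive:
   at the first time a perturbed member would vanish, it has just been
   decreasing, contradicting perturbed_deriv_pos. *)
Lemma perturbed_positive (eps t0 : R) :
  0 < eps -> 0 <= t0 -> eps * exp ((K + 1) * t0) <= 1 ->
  forall i, (i < n)%nat -> 0 < u i t0 + eps * exp ((K + 1) * t0).
Proof.
  intros Heps Ht0 Hsmall i0 Hi0. apply Rnot_le_lt; intro Hneg.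
  set (ramp := fun t => eps * exp ((K + 1) * t)).
  set (v := fun i t => u i t + ramp t).
  assert (Hv_cont : forall i, (i < n)%nat -> cont_nonneg (v i)).
  { intros i Hi; apply cont_plus; [apply u_cont, Hi |].
    apply cont_of_continuity; intro t. apply derivable_continuous_pt.
    eexists; apply derivable_pt_lim_exp_ramp. }
  assert (Hv0 : forall i, (i < n)%nat -> 0 < v i 0).
  { intros i Hi; unfold v, ramp. rewrite Rmult_0_r, exp_0.
    specialize (u_init i Hi); lra. }
  destruct (first_exit n v Hv_cont i0 t0 Hv0 Hi0 Ht0 Hneg)
    as [ts [i [Hts [Hi [Hvts Hbefore]]]]].
  assert (Hramp : forall t, t <= ts -> 0 < ramp t <= 1).
  { intros t Ht. unfold ramp. split; [apply Rmult_lt_0_compat; [lra | apply exp_pos] |].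
    apply Rle_trans with (eps * exp ((K + 1) * t0)); [| exact Hsmall].
    apply Rmult_le_compat_l; [lra |]. apply exp_le_exp; nra. }
  assert (Hu_neg : u i ts < 0)
    by (pose proof (Hramp ts (Rle_refl _)); unfold v in Hvts; lra).
  destruct (u_cont i Hi ts (Rlt_le _ _ (proj1 Hts)) (- u i ts) ltac:(lra))
    as [d1 [Hd1 Hnear]].
  destruct (bad_sparse ts (proj1 Hts)) as [d2 [Hd2 Hregular]].
  set (s0 := ts - Rmin (Rmin d1 d2) ts / 2).
  assert (Hs0 : ts - d1 < s0 /\ ts - d2 < s0 /\ 0 < s0 < ts).
  { pose proof (Rmin_l (Rmin d1 d2) ts); pose proof (Rmin_r (Rmin d1 d2) ts).
    pose proof (Rmin_l d1 d2); pose proof (Rmin_r d1 d2).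
    assert (0 < Rmin (Rmin d1 d2) ts) by (repeat apply Rmin_pos; lra).
    unfold s0; lra. }
  assert (Hincr : v i s0 < v i ts).
  { apply (increasing_of_pos_deriv (v i)
             (fun c => D i c + eps * ((K + 1) * exp ((K + 1) * c))));
      [lra | apply Hv_cont, Hi |].
    intros c Hc. assert (Hreg : ~ bad c) by (apply Hregular; lra).
    split.
    - apply derivable_pt_lim_plus; [apply u_deriv; auto; lra |].
      apply derivable_pt_lim_exp_ramp.
    - apply perturbed_deriv_pos; auto; [lra | apply Hramp; lra | |].
      + intros j Hj; apply (Hbefore c); [lra | exact Hj].
      + specialize (Hnear c ltac:(lra) ltac:(rewrite Rabs_left; lra)).
        revert Hnear; unfold Rabs; destruct Rcase_abs; lra. }
  specialize (Hbefore s0 ltac:(lra) i Hi); lra.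
Qed.

Theorem comparison_principle : forall i t, (i < n)%nat -> 0 <= t -> 0 <= u i t.
Proof.
  intros i t Hi Ht. apply Rnot_lt_le; intro Hlt.
  set (X := exp ((K + 1) * t)).
  assert (HX : 0 < X) by apply exp_pos.
  set (eps := Rmin (1 / X) (- u i t / (2 * X))).
  assert (Heps : 0 < eps) by (apply Rmin_pos; apply Rdiv_lt_0_compat; lra).
  assert (Hsmall : eps * X <= 1).
  { apply Rle_trans with (1 / X * X); [apply Rmult_le_compat_r; [lra | apply Rmin_l] |].
    right; field; lra. }
  assert (Hhalf : eps * X <= - u i t / 2).
  { apply Rle_trans with (- u i t / (2 * X) * X);
      [apply Rmult_le_compat_r; [lra | apply Rmin_r] |].
    right; field; lra. }
  specialize (perturbed_positive eps t Heps Ht Hsmall i Hi); fold X; lra.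
Qed.
End Comparison.

(** One-sided Lipschitz estimates for the vector field *)

(* The constant K in the quasi-monotonicity condition. *)
Definition rate_const (lam beta Gam : R) : R := 100 * (beta + lam + Gam * lam).

Lemma rate_const_nonneg (lam beta Gam : R) :
  0 < lam -> 0 < beta -> 0 < Gam -> 0 <= rate_const lam beta Gam.
Proof. intros; unfold rate_const; assert (0 <= Gam * lam) by nra; lra. Qed.

Ltac nonneg_product := repeat match goal with |- 0 <= _ * _ => apply Rmult_le_pos end; lra.

Lemma nonpos_mult (p q : R) : 0 <= p -> q <= 0 -> p * q <= 0.
Proof. intros; nra. Qed.

(* A product of two numbers, each at least -a_k and at most a nonnegative
   bound, is at least -(a1 Q + a2 P): only one factor can be negative. *)
Lemma product_lower_bound (p q a1 a2 P Q : R) :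
  - a1 <= p <= P -> - a2 <= q <= Q -> 0 <= a1 -> 0 <= a2 -> 0 <= P -> 0 <= Q ->
  - (a1 * Q + a2 * P) <= p * q.
Proof.
  intros [] [] ? ? ? ?.
  destruct (Rle_or_lt 0 p), (Rle_or_lt 0 q); nra.
Qed.

Lemma rate_terms_nonneg (lam beta Gam a : R) :
  0 < lam -> 0 < beta -> 0 < Gam -> 0 < a ->
  0 <= beta * a /\ 0 <= lam * a /\ 0 <= Gam * lam * a.
Proof. intros; repeat split; nonneg_product. Qed.

Section RegionEstimates.
Variables (lam beta Gam sg a b d s xb xd y : R).
Hypotheses (Hlam : 0 < lam) (Hbeta : 0 < beta) (HGam : 0 < Gam <= 1) (Hsg : 0 <= sg <= 1)
  (Ha : 0 < a <= 1) (Hsum : b + d + s = 1)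
  (H0 : - a <= xb) (H1 : - a <= b - xb) (H2 : - a <= xd) (H3 : - a <= d - xd)
  (H4 : - a <= y) (H5 : - a <= s - y).

(* On a face where a slack is nonpositive, its rate of change is at least
   -K a: the field points (almost) into R(t). One lemma per face. *)
Lemma region_rate_xb_low : xb <= 0 ->
  - (rate_const lam beta Gam * a) <= f_xb lam beta b xb xd y.
Proof.
  intro Hx. unfold f_xb, rate_const.
  pose proof (rate_terms_nonneg lam beta Gam a Hlam Hbeta (proj1 HGam) (proj1 Ha)).
  assert (A := product_lower_bound (b - xb) (xb + xd + y) a (3 * a) 6 5
                 ltac:(lra) ltac:(lra) ltac:(lra) ltac:(lra) ltac:(lra) ltac:(lra)).
  assert (B := Rmult_le_compat_l lam _ _ ltac:(lra) A).
  assert (C := Rmult_le_compat_l beta _ _ ltac:(lra) H2).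
  lra.
Qed.

Lemma region_rate_xb_high : b - xb <= 0 ->
  - (rate_const lam beta Gam * a) <= beta * d - f_xb lam beta b xb xd y.
Proof.
  intro Hx. unfold f_xb, rate_const.
  pose proof (rate_terms_nonneg lam beta Gam a Hlam Hbeta (proj1 HGam) (proj1 Ha)).
  assert (A := product_lower_bound (- (b - xb)) (xb + xd + y) 0 (3 * a) 1 4
                 ltac:(lra) ltac:(lra) ltac:(lra) ltac:(lra) ltac:(lra) ltac:(lra)).
  assert (B := Rmult_le_compat_l lam _ _ ltac:(lra) A).
  assert (C := Rmult_le_compat_l beta _ _ ltac:(lra) H3).
  lra.
Qed.

Lemma region_rate_xd_low : xd <= 0 ->
  - (rate_const lam beta Gam * a) <= f_xd lam beta Gam d s xb xd y.
Proof.
  intro Hx. unfold f_xd, rate_const.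
  pose proof (rate_terms_nonneg lam beta Gam a Hlam Hbeta (proj1 HGam) (proj1 Ha)).
  assert (A1 := product_lower_bound (d - xd) y a a 6 6
                  ltac:(lra) ltac:(lra) ltac:(lra) ltac:(lra) ltac:(lra) ltac:(lra)).
  assert (B1 := Rmult_le_compat_l (Gam * lam) _ _ ltac:(nonneg_product) A1).
  assert (A2 := product_lower_bound xd s a (2 * a) 0 5
                  ltac:(lra) ltac:(lra) ltac:(lra) ltac:(lra) ltac:(lra) ltac:(lra)).
  assert (B2 := Rmult_le_compat_l (Gam * lam) _ _ ltac:(nonneg_product) A2).
  assert (A3 := product_lower_bound (d - xd) (xb + xd + y) a (3 * a) 6 5
                  ltac:(lra) ltac:(lra) ltac:(lra) ltac:(lra) ltac:(lra) ltac:(lra)).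
  assert (B3 := Rmult_le_compat_l lam _ _ ltac:(lra) A3).
  assert (beta * xd <= 0) by (apply nonpos_mult; lra).
  lra.
Qed.

Lemma region_rate_xd_high : d - xd <= 0 ->
  - (rate_const lam beta Gam * a)
    <= (- beta * d + lam * Gam * d * s) - f_xd lam beta Gam d s xb xd y.
Proof.
  intro Hx. unfold f_xd, rate_const.
  pose proof (rate_terms_nonneg lam beta Gam a Hlam Hbeta (proj1 HGam) (proj1 Ha)).
  assert (A1 := product_lower_bound (d - xd) (s - y) a a 0 6
                  ltac:(lra) ltac:(lra) ltac:(lra) ltac:(lra) ltac:(lra) ltac:(lra)).
  assert (B1 := Rmult_le_compat_l (Gam * lam) _ _ ltac:(nonneg_product) A1).
  assert (A3 := product_lower_bound (- (d - xd)) (xb + xd + y) 0 (3 * a) 1 4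
                  ltac:(lra) ltac:(lra) ltac:(lra) ltac:(lra) ltac:(lra) ltac:(lra)).
  assert (B3 := Rmult_le_compat_l lam _ _ ltac:(lra) A3).
  assert (beta * (d - xd) <= 0) by (apply nonpos_mult; lra).
  lra.
Qed.

Lemma pressure_bounds : - 3 * a <= xb + y + (1 - Gam) * xd <= 12.
Proof.
  assert (- a <= (1 - Gam) * xd).
  { apply Rle_trans with ((1 - Gam) * (- a)); [nra |].
    apply Rmult_le_compat_l; lra. }
  assert ((1 - Gam) * xd <= 6).
  { destruct (Rle_or_lt 0 xd); [nra |].
    assert ((1 - Gam) * xd <= 0) by (apply nonpos_mult; lra). lra. }
  lra.
Qed.

Lemma region_rate_y_low : y <= 0 ->
  - (rate_const lam beta Gam * a) <= f_y lam Gam d s sg xb xd y.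
Proof.
  intro Hx. unfold f_y, rate_const.
  pose proof (rate_terms_nonneg lam beta Gam a Hlam Hbeta (proj1 HGam) (proj1 Ha)).
  pose proof pressure_bounds.
  assert (A1 := product_lower_bound d (- y) (2 * a) 0 5 1
                  ltac:(lra) ltac:(lra) ltac:(lra) ltac:(lra) ltac:(lra) ltac:(lra)).
  assert (B1 := Rmult_le_compat_l (Gam * lam) _ _ ltac:(nonneg_product) A1).
  assert (A2 := product_lower_bound (s - y) (xb + y + (1 - Gam) * xd) a (3 * a) 6 12
                  ltac:(lra) ltac:(lra) ltac:(lra) ltac:(lra) ltac:(lra) ltac:(lra)).
  assert (B2 := Rmult_le_compat_l (lam * sg) _ _ ltac:(nonneg_product) A2).
  assert (0 <= lam * (a * 12 + 3 * a * 6) * (1 - sg)) by nonneg_product.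
  nra.
Qed.

Lemma region_rate_y_high : s - y <= 0 ->
  - (rate_const lam beta Gam * a)
    <= (0 - beta * d - (- beta * d + lam * Gam * d * s)) - f_y lam Gam d s sg xb xd y.
Proof.
  intro Hx. unfold f_y, rate_const.
  pose proof (rate_terms_nonneg lam beta Gam a Hlam Hbeta (proj1 HGam) (proj1 Ha)).
  pose proof pressure_bounds.
  assert (A1 := product_lower_bound d (- (s - y)) (2 * a) 0 5 1
                  ltac:(lra) ltac:(lra) ltac:(lra) ltac:(lra) ltac:(lra) ltac:(lra)).
  assert (B1 := Rmult_le_compat_l (Gam * lam) _ _ ltac:(nonneg_product) A1).
  assert (A2 := product_lower_bound (- (s - y)) (xb + y + (1 - Gam) * xd) 0 (3 * a) 1 12
                  ltac:(lra) ltac:(lra) ltac:(lra) ltac:(lra) ltac:(lra) ltac:(lra)).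
  assert (B2 := Rmult_le_compat_l (lam * sg) _ _ ltac:(nonneg_product) A2).
  assert (0 <= lam * (3 * a) * (1 - sg)) by nonneg_product.
  nra.
Qed.
End RegionEstimates.

Section ComparisonEstimates.
Variables (lam beta Gam sg1 sg2 a b d s xb1 xd1 y1 xb2 xd2 y2 : R).
Hypotheses (Hlam : 0 < lam) (Hbeta : 0 < beta) (HGam : 0 < Gam <= 1)
  (Hsg1 : 0 <= sg1 <= 1) (Hsg : sg2 <= sg1)
  (Ha : 0 < a <= 1) (Hsum : b + d + s = 1)
  (R1 : 0 <= xb1 <= b) (R2 : 0 <= xd1 <= d) (R3 : 0 <= y1 <= s)
  (R4 : 0 <= xb2 <= b) (R5 : 0 <= xd2 <= d) (R6 : 0 <= y2 <= s)
  (U1 : - a <= xb1 - xb2) (U2 : - a <= xd1 - xd2) (U3 : - a <= y1 - y2).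

(* The vector field is quasi-monotone on R(t): when one coordinate of the
   first state falls below that of the second, it catches up at rate at
   least -K a.  One lemma per coordinate. *)
Lemma compare_rate_xb : xb1 - xb2 <= 0 ->
  - (rate_const lam beta Gam * a)
    <= f_xb lam beta b xb1 xd1 y1 - f_xb lam beta b xb2 xd2 y2.
Proof.
  intro Hx. unfold f_xb, rate_const.
  pose proof (rate_terms_nonneg lam beta Gam a Hlam Hbeta (proj1 HGam) (proj1 Ha)).
  assert (A := product_lower_bound (b - xb1) ((xb1 - xb2) + (xd1 - xd2) + (y1 - y2)) 0 (3 * a) 1 3
                 ltac:(lra) ltac:(lra) ltac:(lra) ltac:(lra) ltac:(lra) ltac:(lra)).
  assert (B := Rmult_le_compat_l lam _ _ ltac:(lra) A).
  assert (C := Rmult_le_compat_l beta _ _ ltac:(lra) U2).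
  assert (0 <= lam * (- (xb1 - xb2)) * (xb2 + xd2 + y2)) by nonneg_product.
  lra.
Qed.

Lemma compare_rate_xd : xd1 - xd2 <= 0 ->
  - (rate_const lam beta Gam * a)
    <= f_xd lam beta Gam d s xb1 xd1 y1 - f_xd lam beta Gam d s xb2 xd2 y2.
Proof.
  intro Hx. unfold f_xd, rate_const.
  pose proof (rate_terms_nonneg lam beta Gam a Hlam Hbeta (proj1 HGam) (proj1 Ha)).
  assert (A1 := product_lower_bound (d - xd1) (y1 - y2) 0 a 1 1
                  ltac:(lra) ltac:(lra) ltac:(lra) ltac:(lra) ltac:(lra) ltac:(lra)).
  assert (B1 := Rmult_le_compat_l (Gam * lam) _ _ ltac:(nonneg_product) A1).
  assert (A2 := product_lower_bound s (xd1 - xd2) 0 a 1 0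
                  ltac:(lra) ltac:(lra) ltac:(lra) ltac:(lra) ltac:(lra) ltac:(lra)).
  assert (B2 := Rmult_le_compat_l (Gam * lam) _ _ ltac:(nonneg_product) A2).
  assert (A3 := product_lower_bound (d - xd1) ((xb1 - xb2) + (xd1 - xd2) + (y1 - y2)) 0 (3 * a) 1 3
                  ltac:(lra) ltac:(lra) ltac:(lra) ltac:(lra) ltac:(lra) ltac:(lra)).
  assert (B3 := Rmult_le_compat_l lam _ _ ltac:(lra) A3).
  assert (0 <= Gam * lam * (- (xd1 - xd2)) * y2) by nonneg_product.
  assert (0 <= lam * (- (xd1 - xd2)) * (xb2 + xd2 + y2)) by nonneg_product.
  assert (0 <= beta * (- (xd1 - xd2))) by nonneg_product.
  lra.
Qed.

Lemma compare_rate_y : y1 - y2 <= 0 ->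
  - (rate_const lam beta Gam * a)
    <= f_y lam Gam d s sg1 xb1 xd1 y1 - f_y lam Gam d s sg2 xb2 xd2 y2.
Proof.
  intro Hx. unfold rate_const.
  pose proof (rate_terms_nonneg lam beta Gam a Hlam Hbeta (proj1 HGam) (proj1 Ha)).
  set (Q2 := xb2 + y2 + (1 - Gam) * xd2).
  set (dQ := (xb1 - xb2) + (y1 - y2) + (1 - Gam) * (xd1 - xd2)).
  assert (HQ2 : 0 <= Q2) by (assert (0 <= (1 - Gam) * xd2) by nonneg_product; unfold Q2; lra).
  assert (HdQ : - (3 * a) <= dQ <= 3).
  { assert (- a <= (1 - Gam) * (xd1 - xd2) <= 1); [| unfold dQ; lra].
    split; [| nra].
    apply Rle_trans with ((1 - Gam) * (- a)); [nra | apply Rmult_le_compat_l; lra]. }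
  assert (Hsplit : f_y lam Gam d s sg1 xb1 xd1 y1 - f_y lam Gam d s sg2 xb2 xd2 y2 =
     - Gam * lam * d * (y1 - y2) + lam * ((sg1 - sg2) * (s - y2) * Q2
        + (sg1 * (s - y1)) * dQ + sg1 * (- (y1 - y2)) * Q2)) by (unfold f_y, Q2, dQ; ring).
  rewrite Hsplit.
  assert (0 <= Gam * lam * d * (- (y1 - y2))) by nonneg_product.
  assert (E2 : 0 <= (sg1 - sg2) * (s - y2) * Q2) by nonneg_product.
  assert (E3 : 0 <= sg1 * (- (y1 - y2)) * Q2) by nonneg_product.
  assert (Hp : 0 <= sg1 * (s - y1) <= 1).
  { split; [nonneg_product |].
    assert (sg1 * (s - y1) <= 1 * 1) by (apply Rmult_le_compat; lra); lra. }
  assert (A := product_lower_bound (sg1 * (s - y1)) dQ 0 (3 * a) 1 3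
                 ltac:(lra) ltac:(lra) ltac:(lra) ltac:(lra) ltac:(lra) ltac:(lra)).
  assert (B := Rmult_le_compat_l lam _ _ ltac:(lra)
                 (Rplus_le_compat _ _ _ _ (Rplus_le_compat _ _ _ _ E2 A) E3)).
  lra.
Qed.
End ComparisonEstimates.

Definition region_slack (b d xb xd y : R) (i : nat) : R :=
  match i with
  | 0%nat => xb | 1%nat => b - xb | 2%nat => xd | 3%nat => d - xd | 4%nat => y
  | _ => (1 - b - d) - y
  end.

(* Their rates of change along the flow, using b' = beta d and
   d' = - beta d + lam Gam d s. *)
Definition region_slack_rate (lam beta Gam b d sg xb xd y : R) (i : nat) : R :=
  let s := 1 - b - d in
  match i with
  | 0%nat => f_xb lam beta b xb xd y
  | 1%nat => beta * d - f_xb lam beta b xb xd y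
  | 2%nat => f_xd lam beta Gam d s xb xd y
  | 3%nat => (- beta * d + lam * Gam * d * s) - f_xd lam beta Gam d s xb xd y
  | 4%nat => f_y lam Gam d s sg xb xd y
  | _ => (0 - beta * d - (- beta * d + lam * Gam * d * s)) - f_y lam Gam d s sg xb xd y
  end.

Lemma region_slack_rate_bound (lam beta Gam b d sg a xb xd y : R) (i : nat) :
  0 < lam -> 0 < beta -> 0 < Gam <= 1 -> 0 <= sg <= 1 -> 0 < a <= 1 ->
  (forall j, (j < 6)%nat -> - a <= region_slack b d xb xd y j) ->
  (i < 6)%nat -> region_slack b d xb xd y i <= 0 ->
  - (rate_const lam beta Gam * a) <= region_slack_rate lam beta Gam b d sg xb xd y i.
Proof.
  intros Hlam Hbeta HGam Hsg Ha Hnear Hi Hface.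
  assert (Hsum : b + d + (1 - b - d) = 1) by ring.
  pose proof (Hnear 0%nat ltac:(lia)); pose proof (Hnear 1%nat ltac:(lia));
  pose proof (Hnear 2%nat ltac:(lia)); pose proof (Hnear 3%nat ltac:(lia));
  pose proof (Hnear 4%nat ltac:(lia)); pose proof (Hnear 5%nat ltac:(lia)).
  simpl in *.
  destruct i as [| [| [| [| [| [| i]]]]]]; try lia.
  - eapply region_rate_xb_low; eauto.
  - eapply region_rate_xb_high; eauto.
  - eapply region_rate_xd_low; eauto.
  - eapply region_rate_xd_high; eauto.
  - eapply region_rate_y_low; eauto.
  - eapply region_rate_y_high; eauto.
Qed.

(* The slacks are differentiable where b, d, xb, xd are; the y-derivative is
   only needed for the two faces of y, so the first four also serve g. *)
Lemma region_slack_deriv (lam beta Gam sg t : R) (b d xb xd y : R -> R) (i : nat) :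
  derivable_pt_lim b t (beta * d t) ->
  derivable_pt_lim d t (- beta * d t + lam * Gam * d t * (1 - b t - d t)) ->
  derivable_pt_lim xb t (f_xb lam beta (b t) (xb t) (xd t) (y t)) ->
  derivable_pt_lim xd t (f_xd lam beta Gam (d t) (1 - b t - d t) (xb t) (xd t) (y t)) ->
  ((4 <= i)%nat ->
     derivable_pt_lim y t (f_y lam Gam (d t) (1 - b t - d t) sg (xb t) (xd t) (y t))) ->
  (i < 6)%nat ->
  derivable_pt_lim (fun t => region_slack (b t) (d t) (xb t) (xd t) (y t) i) t
    (region_slack_rate lam beta Gam (b t) (d t) sg (xb t) (xd t) (y t) i).
Proof.
  intros Db Dd Dxb Dxd Dy Hi.
  destruct i as [| [| [| [| [| [| i]]]]]]; try lia; simpl;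
    repeat first [ apply derivable_pt_lim_minus_pt | apply derivable_pt_lim_const
                 | assumption | apply Dy; lia ].
Qed.

Definition compare_gap (xb1 xd1 y1 xb2 xd2 y2 : R) (i : nat) : R :=
  match i with 0%nat => xb1 - xb2 | 1%nat => xd1 - xd2 | _ => y1 - y2 end.

Definition compare_gap_rate (lam beta Gam b d sg1 sg2 xb1 xd1 y1 xb2 xd2 y2 : R)
    (i : nat) : R :=
  let s := 1 - b - d in
  match i with
  | 0%nat => f_xb lam beta b xb1 xd1 y1 - f_xb lam beta b xb2 xd2 y2
  | 1%nat => f_xd lam beta Gam d s xb1 xd1 y1 - f_xd lam beta Gam d s xb2 xd2 y2
  | _ => f_y lam Gam d s sg1 xb1 xd1 y1 - f_y lam Gam d s sg2 xb2 xd2 y2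
  end.

Lemma compare_gap_rate_bound (lam beta Gam sg1 sg2 a t : R) (b d : R -> R)
    (xb1 xd1 y1 xb2 xd2 y2 : R) (i : nat) :
  0 < lam -> 0 < beta -> 0 < Gam <= 1 ->
  0 <= sg1 <= 1 -> sg2 <= sg1 -> 0 < a <= 1 ->
  in_region b d t xb1 xd1 y1 -> in_region b d t xb2 xd2 y2 ->
  (forall j, (j < 3)%nat -> - a <= compare_gap xb1 xd1 y1 xb2 xd2 y2 j) ->
  (i < 3)%nat -> compare_gap xb1 xd1 y1 xb2 xd2 y2 i <= 0 ->
  - (rate_const lam beta Gam * a)
    <= compare_gap_rate lam beta Gam (b t) (d t) sg1 sg2 xb1 xd1 y1 xb2 xd2 y2 i.
Proof.
  intros Hlam Hbeta HGam Hsg1 Hsg Ha [R1 [R2 R3]] [R4 [R5 R6]] Hnear Hi Hgap.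
  assert (Hsum : b t + d t + (1 - b t - d t) = 1) by ring.
  pose proof (Hnear 0%nat ltac:(lia)); pose proof (Hnear 1%nat ltac:(lia));
  pose proof (Hnear 2%nat ltac:(lia)).
  simpl in *.
  destruct i as [| [| [| i]]]; try lia.
  - eapply compare_rate_xb; eauto.
  - eapply compare_rate_xd; eauto.
  - eapply compare_rate_y; eauto.
Qed.

(* The gaps are differentiable where both states are; y-derivatives are only
   needed for the third gap, so the first two also serve the subsystem g. *)
Lemma compare_gap_deriv (lam beta Gam sg1 sg2 t : R) (b d xb1 xd1 y1 xb2 xd2 y2 : R -> R)
    (i : nat) :
  let s := 1 - b t - d t in
  derivable_pt_lim xb1 t (f_xb lam beta (b t) (xb1 t) (xd1 t) (y1 t)) ->
  derivable_pt_lim xd1 t (f_xd lam beta Gam (d t) s (xb1 t) (xd1 t) (y1 t)) ->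
  derivable_pt_lim xb2 t (f_xb lam beta (b t) (xb2 t) (xd2 t) (y2 t)) ->
  derivable_pt_lim xd2 t (f_xd lam beta Gam (d t) s (xb2 t) (xd2 t) (y2 t)) ->
  ((2 <= i)%nat ->
     derivable_pt_lim y1 t (f_y lam Gam (d t) s sg1 (xb1 t) (xd1 t) (y1 t)) /\
     derivable_pt_lim y2 t (f_y lam Gam (d t) s sg2 (xb2 t) (xd2 t) (y2 t))) ->
  (i < 3)%nat ->
  derivable_pt_lim (fun t => compare_gap (xb1 t) (xd1 t) (y1 t) (xb2 t) (xd2 t) (y2 t) i) t
    (compare_gap_rate lam beta Gam (b t) (d t) sg1 sg2
       (xb1 t) (xd1 t) (y1 t) (xb2 t) (xd2 t) (y2 t) i).
Proof.
  intros s Dxb1 Dxd1 Dxb2 Dxd2 Dy Hi.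
  destruct i as [| [| [| i]]]; try lia; simpl; apply derivable_pt_lim_minus_pt;
    try assumption; apply Dy; lia.
Qed.

(** Invariance of the region R(t) *)

Lemma region_invariant_f (lam beta Gam d0 : R) (b d sig xb xd y : R -> R) :
  0 < lam -> 0 < beta -> 0 < Gam <= 1 -> bd_solution lam beta Gam d0 b d ->
  (forall t, 0 <= t -> 0 <= sig t <= 1) ->
  f_solution lam beta Gam b d sig xb xd y ->
  in_region b d 0 (xb 0) (xd 0) (y 0) ->
  forall t, 0 <= t -> in_region b d t (xb t) (xd t) (y t).
Proof.
  intros Hlam Hbeta HGam [_ [_ [Hb_cont [Hd_cont Hbd_deriv]]]] Hsig
    [Hxb_cont [Hxd_cont [Hy_cont [tau [Htau Hderiv]]]]] Hinit t Ht.
  set (u := fun i t => region_slack (b t) (d t) (xb t) (xd t) (y t) i).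
  assert (Hslack : forall i, (i < 6)%nat -> 0 <= u i t).
  { intros i Hi.
    refine (comparison_principle 6 u
      (fun i t => region_slack_rate lam beta Gam (b t) (d t) (sig t) (xb t) (xd t) (y t) i)
      (fun t => exists k, t = tau k) (rate_const lam beta Gam)
      (rate_const_nonneg lam beta Gam Hlam Hbeta (proj1 HGam)) _ _
      (partition_left_sparse tau Htau) _ _ i t Hi Ht).
    - intros j Hj; unfold u.
      destruct j as [| [| [| [| [| [| j]]]]]]; try lia; simpl;
        repeat first [apply cont_minus | apply cont_const | assumption].
    - intros j Hj; unfold u, in_region in *.
      destruct j as [| [| [| [| [| [| j]]]]]]; try lia; simpl; lra.
    - intros j s Hj Hs Hreg.
      assert (Hnode : forall k, s <> tau k) by (intros k Hk; apply Hreg; exists k; exact Hk).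
      destruct (Hderiv s Hs Hnode) as [Dxb [Dxd Dy]].
      destruct (Hbd_deriv s Hs) as [Db Dd].
      apply region_slack_deriv; auto.
    - intros j s a Hj Hs _ Ha Hnear Hface.
      apply region_slack_rate_bound; auto; apply Hsig; lra. }
  unfold u in Hslack.
  pose proof (Hslack 0%nat ltac:(lia)); pose proof (Hslack 1%nat ltac:(lia));
  pose proof (Hslack 2%nat ltac:(lia)); pose proof (Hslack 3%nat ltac:(lia));
  pose proof (Hslack 4%nat ltac:(lia)); pose proof (Hslack 5%nat ltac:(lia)).
  unfold in_region; simpl in *; lra.
Qed.

Lemma region_invariant_g (lam beta Gam d0 : R) (b d y xb xd : R -> R) :
  0 < lam -> 0 < beta -> 0 < Gam <= 1 -> bd_solution lam beta Gam d0 b d ->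
  (forall t, 0 <= t -> 0 <= y t <= 1 - b t - d t) ->
  g_solution lam beta Gam b d y xb xd ->
  0 <= xb 0 <= b 0 -> 0 <= xd 0 <= d 0 ->
  forall t, 0 <= t -> in_region b d t (xb t) (xd t) (y t).
Proof.
  intros Hlam Hbeta HGam [_ [_ [Hb_cont [Hd_cont Hbd_deriv]]]] Hy
    [Hxb_cont [Hxd_cont Hderiv]] Hxb0 Hxd0 t Ht.
  set (u := fun i t => region_slack (b t) (d t) (xb t) (xd t) (y t) i).
  assert (Hslack : forall i, (i < 4)%nat -> 0 <= u i t).
  { intros i Hi.
    refine (comparison_principle 4 u
      (fun i t => region_slack_rate lam beta Gam (b t) (d t) 0 (xb t) (xd t) (y t) i)
      (fun _ => False) (rate_const lam beta Gam)
      (rate_const_nonneg lam beta Gam Hlam Hbeta (proj1 HGam)) _ _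
      left_sparse_empty _ _ i t Hi Ht).
    - intros j Hj; unfold u.
      destruct j as [| [| [| [| j]]]]; try lia; simpl;
        repeat first [apply cont_minus | assumption].
    - intros j Hj; unfold u.
      destruct j as [| [| [| [| j]]]]; try lia; simpl; lra.
    - intros j s Hj Hs _.
      destruct (Hderiv s Hs) as [Dxb Dxd]; destruct (Hbd_deriv s Hs) as [Db Dd].
      apply region_slack_deriv; auto; lia.
    - intros j s a Hj Hs _ Ha Hnear Hface.
      apply region_slack_rate_bound; auto; [lra |].
      intros k Hk. destruct (Nat.lt_ge_cases k 4) as [Hk4 | Hk4]; [exact (Hnear k Hk4) |].
      destruct k as [| [| [| [| [| [| k]]]]]]; try lia; simpl;
        specialize (Hy s ltac:(lra)); lra. }
  unfold u in Hslack.
  pose proof (Hslack 0%nat ltac:(lia)); pose proof (Hslack 1%nat ltac:(lia));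
  pose proof (Hslack 2%nat ltac:(lia)); pose proof (Hslack 3%nat ltac:(lia)).
  specialize (Hy t Ht); unfold in_region; simpl in *; lra.
Qed.

Lemma compare_f (lam beta Gam d0 : R) (b d sig1 sig2 xb1 xd1 y1 xb2 xd2 y2 : R -> R) :
  0 < lam -> 0 < beta -> 0 < Gam <= 1 -> bd_solution lam beta Gam d0 b d ->
  (forall t, 0 <= t -> 0 <= sig1 t <= 1) -> (forall t, 0 <= t -> 0 <= sig2 t <= 1) ->
  (forall t, 0 <= t -> sig1 t >= sig2 t) ->
  f_solution lam beta Gam b d sig1 xb1 xd1 y1 ->
  f_solution lam beta Gam b d sig2 xb2 xd2 y2 ->
  in_region b d 0 (xb1 0) (xd1 0) (y1 0) -> in_region b d 0 (xb2 0) (xd2 0) (y2 0) ->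
  xb1 0 >= xb2 0 -> xd1 0 >= xd2 0 -> y1 0 >= y2 0 ->
  forall t, 0 <= t -> xb1 t >= xb2 t /\ xd1 t >= xd2 t /\ y1 t >= y2 t.
Proof.
  intros Hlam Hbeta HGam Hbd Hsig1 Hsig2 Hsig Hf1 Hf2 Hinit1 Hinit2 Hxb0 Hxd0 Hy0 t Ht.
  pose proof (region_invariant_f _ _ _ _ _ _ _ _ _ _ Hlam Hbeta HGam Hbd Hsig1 Hf1 Hinit1)
    as Hreg1.
  pose proof (region_invariant_f _ _ _ _ _ _ _ _ _ _ Hlam Hbeta HGam Hbd Hsig2 Hf2 Hinit2)
    as Hreg2.
  destruct Hf1 as [Hxb1_cont [Hxd1_cont [Hy1_cont [tau1 [Htau1 Hderiv1]]]]].
  destruct Hf2 as [Hxb2_cont [Hxd2_cont [Hy2_cont [tau2 [Htau2 Hderiv2]]]]].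
  set (u := fun i t => compare_gap (xb1 t) (xd1 t) (y1 t) (xb2 t) (xd2 t) (y2 t) i).
  assert (Hgap : forall i, (i < 3)%nat -> 0 <= u i t).
  { intros i Hi.
    refine (comparison_principle 3 u
      (fun i t => compare_gap_rate lam beta Gam (b t) (d t) (sig1 t) (sig2 t)
                    (xb1 t) (xd1 t) (y1 t) (xb2 t) (xd2 t) (y2 t) i)
      (fun t => (exists k, t = tau1 k) \/ (exists k, t = tau2 k)) (rate_const lam beta Gam)
      (rate_const_nonneg lam beta Gam Hlam Hbeta (proj1 HGam)) _ _
      (left_sparse_union _ _ (partition_left_sparse tau1 Htau1)
         (partition_left_sparse tau2 Htau2)) _ _ i t Hi Ht).
    - intros j Hj; unfold u.
      destruct j as [| [| [| j]]]; try lia; simpl; apply cont_minus; assumption.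
    - intros j Hj; unfold u.
      destruct j as [| [| [| j]]]; try lia; simpl; lra.
    - intros j s Hj Hs Hreg.
      assert (Hnode1 : forall k, s <> tau1 k)
        by (intros k Hk; apply Hreg; left; exists k; exact Hk).
      assert (Hnode2 : forall k, s <> tau2 k)
        by (intros k Hk; apply Hreg; right; exists k; exact Hk).
      destruct (Hderiv1 s Hs Hnode1) as [Dxb1 [Dxd1 Dy1]].
      destruct (Hderiv2 s Hs Hnode2) as [Dxb2 [Dxd2 Dy2]].
      apply compare_gap_deriv; auto.
    - intros j s a Hj Hs _ Ha Hnear Hface.
      apply compare_gap_rate_bound; auto;
        [apply Hsig1 | apply Rge_le, Hsig | apply Hreg1 | apply Hreg2]; lra. }
  unfold u in Hgap.
  pose proof (Hgap 0%nat ltac:(lia)); pose proof (Hgap 1%nat ltac:(lia));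
  pose proof (Hgap 2%nat ltac:(lia)).
  simpl in *; lra.
Qed.

Lemma compare_g (lam beta Gam d0 : R) (b d y1 y2 xb1 xd1 xb2 xd2 : R -> R) :
  0 < lam -> 0 < beta -> 0 < Gam <= 1 -> bd_solution lam beta Gam d0 b d ->
  (forall t, 0 <= t -> 1 - b t - d t >= y1 t /\ y1 t >= y2 t /\ y2 t >= 0) ->
  g_solution lam beta Gam b d y1 xb1 xd1 ->
  g_solution lam beta Gam b d y2 xb2 xd2 ->
  0 <= xb1 0 <= b 0 -> 0 <= xd1 0 <= d 0 ->
  0 <= xb2 0 <= b 0 -> 0 <= xd2 0 <= d 0 ->
  xb1 0 >= xb2 0 -> xd1 0 >= xd2 0 ->
  forall t, 0 <= t -> xb1 t >= xb2 t /\ xd1 t >= xd2 t.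
Proof.
  intros Hlam Hbeta HGam Hbd Hy Hg1 Hg2 Hxb10 Hxd10 Hxb20 Hxd20 Hxb0 Hxd0 t Ht.
  assert (Hy1 : forall t, 0 <= t -> 0 <= y1 t <= 1 - b t - d t)
    by (intros s Hs; specialize (Hy s Hs); lra).
  assert (Hy2 : forall t, 0 <= t -> 0 <= y2 t <= 1 - b t - d t)
    by (intros s Hs; specialize (Hy s Hs); lra).
  pose proof (region_invariant_g _ _ _ _ _ _ _ _ _ Hlam Hbeta HGam Hbd Hy1 Hg1 Hxb10 Hxd10)
    as Hreg1.
  pose proof (region_invariant_g _ _ _ _ _ _ _ _ _ Hlam Hbeta HGam Hbd Hy2 Hg2 Hxb20 Hxd20)
    as Hreg2.
  destruct Hg1 as [Hxb1_cont [Hxd1_cont Hderiv1]].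
  destruct Hg2 as [Hxb2_cont [Hxd2_cont Hderiv2]].
  set (u := fun i t => compare_gap (xb1 t) (xd1 t) (y1 t) (xb2 t) (xd2 t) (y2 t) i).
  assert (Hgap : forall i, (i < 2)%nat -> 0 <= u i t).
  { intros i Hi.
    refine (comparison_principle 2 u
      (fun i t => compare_gap_rate lam beta Gam (b t) (d t) 0 0
                    (xb1 t) (xd1 t) (y1 t) (xb2 t) (xd2 t) (y2 t) i)
      (fun _ => False) (rate_const lam beta Gam)
      (rate_const_nonneg lam beta Gam Hlam Hbeta (proj1 HGam)) _ _
      left_sparse_empty _ _ i t Hi Ht).
    - intros j Hj; unfold u.
      destruct j as [| [| j]]; try lia; simpl; apply cont_minus; assumption.
    - intros j Hj; unfold u.
      destruct j as [| [| j]]; try lia; simpl; lra.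
    - intros j s Hj Hs _.
      destruct (Hderiv1 s Hs) as [Dxb1 Dxd1]; destruct (Hderiv2 s Hs) as [Dxb2 Dxd2].
      apply compare_gap_deriv; auto; lia.
    - intros j s a Hj Hs _ Ha Hnear Hface.
      apply compare_gap_rate_bound; auto; [lra | lra | apply Hreg1; lra | apply Hreg2; lra |].
      intros k Hk. destruct (Nat.lt_ge_cases k 2) as [Hk2 | Hk2]; [exact (Hnear k Hk2) |].
      destruct k as [| [| [| k]]]; try lia; simpl; specialize (Hy s ltac:(lra)); lra. }
  unfold u in Hgap.
  pose proof (Hgap 0%nat ltac:(lia)); pose proof (Hgap 1%nat ltac:(lia)).
  simpl in *; lra.
Qed.

Theorem lemma4 (lam beta Gam d0 : R) (b d : R -> R)
  (Hlam : 0 < lam) (Hbeta : 0 < beta) (HGam : 0 < Gam <= 1) (Hd0 : 0 < d0 < 1)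
  (Hbd : bd_solution lam beta Gam d0 b d) :
  (* (a) *)
  (forall (sig1 sig2 xb1 xd1 y1 xb2 xd2 y2 : R -> R),
     admissible sig1 -> admissible sig2 ->
     (forall t, 0 <= t -> sig1 t >= sig2 t) ->
     f_solution lam beta Gam b d sig1 xb1 xd1 y1 ->
     f_solution lam beta Gam b d sig2 xb2 xd2 y2 ->
     in_region b d 0 (xb1 0) (xd1 0) (y1 0) ->
     in_region b d 0 (xb2 0) (xd2 0) (y2 0) ->
     xb1 0 >= xb2 0 -> xd1 0 >= xd2 0 -> y1 0 >= y2 0 ->
     forall t, 0 <= t -> xb1 t >= xb2 t /\ xd1 t >= xd2 t /\ y1 t >= y2 t) /\
  (* (b) *)
  (forall (y1 y2 xb1 xd1 xb2 xd2 : R -> R),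
     cont_nonneg y1 -> cont_nonneg y2 ->
     (forall t, 0 <= t -> 1 - b t - d t >= y1 t /\ y1 t >= y2 t /\ y2 t >= 0) ->
     g_solution lam beta Gam b d y1 xb1 xd1 ->
     g_solution lam beta Gam b d y2 xb2 xd2 ->
     0 <= xb1 0 <= b 0 -> 0 <= xd1 0 <= d 0 ->
     0 <= xb2 0 <= b 0 -> 0 <= xd2 0 <= d 0 ->
     xb1 0 >= xb2 0 -> xd1 0 >= xd2 0 ->
     forall t, 0 <= t -> xb1 t >= xb2 t /\ xd1 t >= xd2 t).
Proof.
  split.
  - intros sig1 sig2 xb1 xd1 y1 xb2 xd2 y2 [Hsig1 _] [Hsig2 _].
    exact (compare_f lam beta Gam d0 b d sig1 sig2 xb1 xd1 y1 xb2 xd2 y2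
             Hlam Hbeta HGam Hbd Hsig1 Hsig2).
  - intros y1 y2 xb1 xd1 xb2 xd2 _ _.
    exact (compare_g lam beta Gam d0 b d y1 y2 xb1 xd1 xb2 xd2 Hlam Hbeta HGam Hbd).
Qed.
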